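(* Let $V$ be a finite set of $N \ge 2$ nodes, and let $G_X=(V,E_X)$ and $G_Y=(V,E_Y)$ be connected undirected graphs on $V$ with positive edge weights, with graph Laplacians $L_X$ and $L_Y$ respectively. Let $L_X^+$ and $L_Y^+$ denote their Moore–Penrose pseudoinverses. For distinct $p,q\in V$ let $e_{p,q}=e_p-e_q$, where $e_p\in\mathbb{R}^N$ is the $p$-th standard basis vector, and define the distance mapping distortion $$\gamma^F(p,q)=\frac{e_{p,q}^\top L_Y^+ e_{p,q}}{e_{p,q}^\top L_X^+ e_{p,q}},\qquad \gamma^F_{\min}=\min_{p,q\in V,\;p\neq q}\gamma^F(p,q).$$ Then $$\gamma^F_{\min}\;\ge\;\frac{1}{\lambda_{\max}\bigl(L_X^+ L_Y\bigr)},$$ where $\lambda_{\max}(\cdot)$ denotes the largest eigenvalue.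
   Context: For a weighted undirected graph with (symmetric, nonnegative) weight matrix $W$ and diagonal degree matrix $D$ (with $D_{pp}=\sum_q W_{pq}$), the Laplacian is $L=D-W$. The quantity $e_{p,q}^\top L^+ e_{p,q}$ is the effective-resistance distance between nodes $p$ and $q$. Here $G_X$ and $G_Y$ play the roles of an input manifold graph and an output manifold graph on the same node set (the same samples), and $\gamma^F(p,q)$ is the ratio of output to input effective-resistance distance. *)

From mathcomp Require Import all_boot all_order all_algebra.
From mathcomp Require Import reals.
Set Implicit Arguments. Unset Strict Implicit. Unset Printing Implicit Defensive.
Import Order.TTheory GRing.Theory Num.Theory.
Local Open Scope ring_scope.

Section Defs.
Variable R : realType.
Variable N : nat.

(* weighted undirected graph on 'I_N given by its weight matrix:
   symmetric, nonnegative, W p q > 0 iff {p,q} is an edge (positive weight) *)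
Definition weight_matrix (W : 'M[R]_N) : Prop :=
  (forall p q, W p q = W q p) /\ (forall p q, 0 <= W p q).

Definition connected_graph (W : 'M[R]_N) : Prop :=
  forall p q : 'I_N, connect (fun a b => 0 < W a b) p q.

Definition degree_mx (W : 'M[R]_N) : 'M[R]_N :=
  diag_mx (\row_p \sum_q W p q).
Definition laplacian (W : 'M[R]_N) : 'M[R]_N := degree_mx W - W.

(* B is the Moore-Penrose pseudoinverse of A (real case: conjugate transpose = transpose) *)
Definition MP_pinv (A B : 'M[R]_N) : Prop :=
  [/\ A *m B *m A = A, B *m A *m B = B,
      (A *m B)^T = A *m B & (B *m A)^T = B *m A].

Definition epq (p q : 'I_N) : 'cV[R]_N := delta_mx p 0 - delta_mx q 0.

Definition qform (A : 'M[R]_N) (x : 'cV[R]_N) : R := (x^T *m A *m x) 0 0.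

Definition gammaF (LXp LYp : 'M[R]_N) (p q : 'I_N) : R :=
  qform LYp (epq p q) / qform LXp (epq p q).

Definition is_lambda_max (A : 'M[R]_N) (lam : R) : Prop :=
  eigenvalue A lam /\ (forall mu, eigenvalue A mu -> mu <= lam).

End Defs.

From mathcomp Require Import all_boot all_order all_algebra.
From mathcomp Require Import reals.
From mathcomp Require Import boolp classical_sets topology normedtype derive.
From mathcomp Require Import ring lra.
Set Implicit Arguments. Unset Strict Implicit. Unset Printing Implicit Defensive.
Import Order.TTheory GRing.Theory Num.Theory.
Import numFieldNormedType.Exports.
Local Open Scope classical_set_scope.
Local Open Scope ring_scope.

(* Put x = e_{p,q}, u = L_X^+ x and w = L_Y^+ x. All three vectors are orthogonal
   to the constants, L_X u = L_Y w = x, hence x^T L_X^+ x = u^T L_X u = u^T L_Y w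
   and x^T L_Y^+ x = w^T L_Y w.  Cauchy-Schwarz for the semidefinite form of L_Y
   gives (u^T L_Y w)^2 <= (u^T L_Y u) (w^T L_Y w), and the Rayleigh-type bound
   u^T L_Y u <= lambda_max u^T L_X u then yields
   x^T L_X^+ x <= lambda_max x^T L_Y^+ x.  For the Rayleigh bound, a maximiser of
   y^T L_Y y / y^T L_X y over the compact set of unit vectors orthogonal to the
   constants exists; maximality makes mu L_X - L_Y semidefinite there, which
   forces the maximiser to be an eigenvector of L_X^+ L_Y for the maximal value
   mu, so mu <= lambda_max. *)

Section BilinearForm.
Variables (R : realFieldType) (n : nat).
Implicit Types (M : 'M[R]_n) (x y u w : 'cV[R]_n).

Definition bilin M x y : R := (x^T *m M *m y) 0 0.

Lemma bilin_sum M x y : bilin M x y = \sum_i \sum_j x i 0 * M i j * y j 0.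
Proof.
rewrite /bilin mxE; under eq_bigr do rewrite mxE big_distrl /=.
rewrite exchange_big /=; apply: eq_bigr => i _; apply: eq_bigr => j _.
by rewrite mxE.
Qed.

Lemma bilin_tr M x y : bilin M x y = bilin M^T y x.
Proof.
by rewrite /bilin -[in LHS](trmxK (x^T *m M *m y)) [in LHS]mxE !trmx_mul trmxK mulmxA.
Qed.

Lemma bilin_mulr M x y : bilin M x y = bilin 1%:M x (M *m y).
Proof. by rewrite /bilin mulmx1 mulmxA. Qed.

Lemma bilin0l M y : bilin M 0 y = 0.
Proof. by rewrite /bilin trmx0 !mul0mx mxE. Qed.

Lemma bilin_mull M x y : bilin M x y = bilin 1%:M (M^T *m x) y.
Proof. by rewrite /bilin mulmx1 trmx_mul trmxK. Qed.

Lemma bilin1 x y : bilin 1%:M x y = \sum_i x i 0 * y i 0.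
Proof. by rewrite /bilin mulmx1 mxE; apply: eq_bigr => i _; rewrite mxE. Qed.

Lemma bilin1_eq0 x : bilin 1%:M x x = 0 -> x = 0.
Proof.
rewrite bilin1 => /eqP; rewrite psumr_eq0 => [/allP x0|i _]; last by rewrite -expr2 sqr_ge0.
apply/matrixP => i j; rewrite (ord1 j) mxE.
by move: (x0 i (mem_index_enum i)); rewrite -expr2 sqrf_eq0 => /eqP.
Qed.

Lemma bilin_combl M s t u w y :
  bilin M (s *: u + t *: w) y = s * bilin M u y + t * bilin M w y.
Proof. by rewrite /bilin !(linearD, linearZ) /= !mulmxDl -!scalemxAl !mxE. Qed.

Lemma bilin_combr M s t u w x :
  bilin M x (s *: u + t *: w) = s * bilin M x u + t * bilin M x w.
Proof. by rewrite /bilin mulmxDr -!scalemxAr !mxE. Qed.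

Lemma bilin_comb M (sM : M^T = M) s t u w :
  bilin M (s *: u + t *: w) (s *: u + t *: w) =
  s ^+ 2 * bilin M u u + 2 * s * t * bilin M u w + t ^+ 2 * bilin M w w.
Proof.
by rewrite bilin_combl !bilin_combr [bilin M w u]bilin_tr sM; ring.
Qed.

Lemma bilinZZ M k x : bilin M (k *: x) (k *: x) = k ^+ 2 * bilin M x x.
Proof.
by rewrite /bilin [(k *: x)^T]linearZ /= -!scalemxAl -scalemxAr !mxE mulrA expr2.
Qed.

Lemma discr_le (a b c : R) :
  (forall s t, 0 <= s ^+ 2 * a + 2 * s * t * b + t ^+ 2 * c) -> b ^+ 2 <= a * c.
Proof.
move=> q_ge0; have c_ge0 : 0 <= c by have := q_ge0 0 1; rewrite !expr0n /=; lra.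
have [c0|c_gt0] := eqVneq c 0.
  have [->|b0] := eqVneq b 0; first by rewrite c0 expr0n mulr0.
  have := q_ge0 1 (- (a + 1) / (2 * b)); rewrite c0 mulr0 addr0.
  have -> : 2 * 1 * (- (a + 1) / (2 * b)) * b = - (a + 1) by field.
  lra.
have := q_ge0 c (- b).
have -> : c ^+ 2 * a + 2 * c * - b * b + (- b) ^+ 2 * c = c * (a * c - b ^+ 2) by ring.
by rewrite pmulr_rge0 ?subr_ge0 // lt_def c_gt0.
Qed.

Lemma bilin_CS M (sM : M^T = M) u w :
  (forall s t, 0 <= bilin M (s *: u + t *: w) (s *: u + t *: w)) ->
  bilin M u w ^+ 2 <= bilin M u u * bilin M w w.
Proof. by move=> psd; apply: discr_le => s t; rewrite -bilin_comb. Qed.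

Lemma psd_mul_eq0 M (sM : M^T = M) u :
  (forall s t, 0 <= bilin M (s *: u + t *: (M *m u)) (s *: u + t *: (M *m u))) ->
  bilin M u u = 0 -> M *m u = 0.
Proof.
move=> psd u0; apply: bilin1_eq0; apply/eqP; rewrite -sqrf_eq0 eq_le sqr_ge0 andbT.
have <- : bilin M u (M *m u) = bilin 1%:M (M *m u) (M *m u).
  by rewrite bilin_mull sM.
by rewrite -(mul0r (bilin M (M *m u) (M *m u))) -u0 bilin_CS.
Qed.

Lemma inv_le_ratio (a b l : R) : 0 < a -> 0 <= b -> a <= l * b -> 1 / l <= b / a.
Proof.
move=> a_gt0 b_ge0 a_le; have l_gt0 : 0 < l.
  by rewrite ltNge; apply/negP => l_le0; have := mulr_le0_ge0 l_le0 b_ge0; lra.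
by rewrite ler_pdivlMr // mulrAC mul1r ler_pdivrMr // mulrC.
Qed.

End BilinearForm.

Lemma eigenvalue_col (F : fieldType) n (M : 'M[F]_n) (v : 'cV[F]_n) a :
  v != 0 -> M *m v = a *: v -> eigenvalue M a.
Proof.
move=> v0 Mv; rewrite /eigenvalue /eigenspace kermx_eq0 row_free_unit.
apply: contra v0 => M_unit; rewrite -(mulKmx M_unit v) mulmxBl Mv.
by rewrite mul_scalar_mx subrr mulmx0.
Qed.

Definition ones_rV (R : nzRingType) n : 'rV[R]_n := const_mx 1.

Definition centered (R : nzRingType) n (y : 'cV[R]_n) : Prop := ones_rV R n *m y = 0.

Lemma ones_rV_mul (R : nzRingType) n (y : 'cV[R]_n) :
  ones_rV R n *m y = (\sum_i y i 0)%:M.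
Proof.
by apply/matrixP => i j; rewrite !ord1 !mxE /=; apply: eq_bigr => k _; rewrite mxE mul1r.
Qed.

Lemma centered_sum (R : nzRingType) n (y : 'cV[R]_n) :
  centered y <-> \sum_i y i 0 = 0.
Proof.
rewrite /centered ones_rV_mul.
by split=> [/matrixP/(_ 0 0)|->]; rewrite ?raddf0 // !mxE eqxx mulr1n.
Qed.

Lemma centered_const (R : numDomainType) n (z : 'cV[R]_n) :
  centered z -> (forall i j, z i 0 = z j 0) -> z = 0.
Proof.
move=> /centered_sum z_sum z_const; apply/matrixP => i j; rewrite ord1 mxE.
move: z_sum; under eq_bigr do rewrite (z_const _ i).
rewrite sumr_const card_ord => /eqP; rewrite mulrn_eq0 => /orP[/eqP n0|/eqP //].
by move: (ltn_ord i); rewrite {2}n0.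
Qed.

Section Laplacian.
Variables (R : realType) (n : nat) (W : 'M[R]_n).
Hypothesis W_weight : weight_matrix W.
Local Notation L := (laplacian W).

Lemma laplacianE i j : L i j = (\sum_k W i k) *+ (i == j) - W i j.
Proof. by rewrite /laplacian /degree_mx !mxE. Qed.

Lemma laplacian_ones : L *m (ones_rV R n)^T = 0.
Proof.
rewrite /ones_rV trmx_const; apply/matrixP => i j; rewrite !mxE.
under eq_bigr do rewrite laplacianE mxE mulr1.
rewrite sumrB (bigD1 i) //= eqxx mulr1n [X in _ + X - _]big1 ?addr0 ?subrr // => k.
by rewrite eq_sym => /negbTE ->.
Qed.

Lemma laplacian_tr : L^T = L.
Proof.
have [W_sym _] := W_weight; apply/matrixP => i j.
by rewrite mxE !laplacianE W_sym eq_sym; case: eqVneq => [->|].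
Qed.

Lemma ones_laplacian : ones_rV R n *m L = 0.
Proof. by rewrite -[LHS]trmxK trmx_mul laplacian_tr laplacian_ones trmx0. Qed.

Lemma centered_laplacian y : centered (L *m y).
Proof. by rewrite /centered mulmxA ones_laplacian mul0mx. Qed.

Lemma qform_laplacian y :
  2 * qform L y = \sum_i \sum_j W i j * (y i 0 - y j 0) ^+ 2.
Proof.
have [W_sym _] := W_weight.
have -> : qform L y = \sum_i \sum_j W i j * (y i 0 ^+ 2 - y i 0 * y j 0).
  rewrite [qform _ _]bilin_sum; apply: eq_bigr => i _.
  under eq_bigr do rewrite laplacianE mulrBr mulrBl.
  rewrite sumrB (bigD1 i) //= eqxx mulr1n [X in _ + X - _]big1 ?addr0 => [|k]; last first.
    by rewrite eq_sym => /negbTE ->; rewrite mulr0n mulr0 mul0r.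
  under [RHS]eq_bigr do rewrite mulrBr.
  rewrite sumrB big_distrr big_distrl /=; congr (_ - _).
    by apply: eq_bigr => k _; ring.
  by apply: eq_bigr => k _; ring.
rewrite mulr_natl mulr2n [X in _ + X]exchange_big -big_split.
apply: eq_bigr => i _; rewrite -big_split; apply: eq_bigr => j _ /=.
by rewrite W_sym; ring.
Qed.

Lemma qform_laplacian_ge0 y : 0 <= qform L y.
Proof.
have [_ W_ge0] := W_weight.
rewrite -(pmulr_rge0 _ (ltr0Sn _ 1)) qform_laplacian.
by apply: sumr_ge0 => i _; apply: sumr_ge0 => j _; rewrite mulr_ge0 ?sqr_ge0.
Qed.

Hypothesis W_conn : connected_graph W.

Lemma qform_laplacian_eq0 z : qform L z = 0 -> forall i j, z i 0 = z j 0.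
Proof.
have [_ W_ge0] := W_weight.
have term_ge0 i j : 0 <= W i j * (z i 0 - z j 0) ^+ 2 by rewrite mulr_ge0 ?sqr_ge0.
move=> /(congr1 (GRing.mul 2)); rewrite qform_laplacian mulr0 => /eqP.
rewrite psumr_eq0 => [/allP row0|i _]; last exact: sumr_ge0.
have edge a b : 0 < W a b -> z a 0 = z b 0.
  move=> Wab; move: (row0 a (mem_index_enum a)); rewrite psumr_eq0 // => /allP.
  move=> /(_ b (mem_index_enum b)); rewrite mulf_eq0 gt_eqF //= sqrf_eq0 subr_eq0.
  by move/eqP.
move=> i j; have /connectP[p p_path ->] := W_conn i j.
by elim: p i p_path => [|a p IHp] i //= /andP[/edge -> /IHp].
Qed.

Lemma centered_laplacian_eq0 z : centered z -> L *m z = 0 -> z = 0.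
Proof.
move=> z_centered Lz; apply: centered_const z_centered _; apply: qform_laplacian_eq0.
by rewrite [qform _ _]bilin_mulr Lz /bilin mulmx0 mxE.
Qed.

Lemma qform_laplacian_gt0 y : centered y -> y != 0 -> 0 < qform L y.
Proof.
move=> y_centered y_neq0; rewrite lt_def qform_laplacian_ge0 andbT.
by apply: contra y_neq0 => /eqP/qform_laplacian_eq0/(centered_const y_centered) ->.
Qed.

Variable P : 'M[R]_n.
Hypothesis P_pinv : MP_pinv L P.

Lemma centered_pinv x : centered (P *m x).
Proof.
have [_ PLP _ PL_sym] := P_pinv.
have ones_PL : ones_rV R n *m (P *m L) = 0.
  by rewrite -PL_sym -[ones_rV R n]trmxK -trmx_mul -mulmxA laplacian_ones mulmx0 trmx0.
by rewrite /centered -{1}PLP -[RHS](mul0mx _ (P *m x)) -ones_PL !mulmxA.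
Qed.

Lemma laplacian_pinv x : centered x -> L *m (P *m x) = x.
Proof.
have [LPL _ LP_sym _] := P_pinv.
move=> x_centered; apply/eqP; rewrite eq_sym -subr_eq0; apply/eqP.
set z := x - _; apply: centered_laplacian_eq0.
  by rewrite /centered mulmxBr x_centered centered_laplacian subrr.
have zL : z^T *m L = 0.
  rewrite /z [(x - _)^T]linearB /= [(_ - _) *m L]mulmxBl (mulmxA L) trmx_mul.
  by rewrite LP_sym -mulmxA LPL subrr.
by rewrite -laplacian_tr -[z]trmxK -trmx_mul zL trmx0.
Qed.

Lemma pinv_laplacian y : centered y -> P *m (L *m y) = y.
Proof.
have [LPL _ _ _] := P_pinv.
move=> y_centered; apply/eqP; rewrite eq_sym -subr_eq0; apply/eqP.
apply: centered_laplacian_eq0.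
  by rewrite /centered mulmxBr y_centered centered_pinv subrr.
by rewrite mulmxBr !mulmxA LPL subrr.
Qed.

Lemma qform_pinv x : centered x -> qform P x = qform L (P *m x).
Proof.
by move=> x_centered; rewrite [RHS]bilin_mull laplacian_tr laplacian_pinv // [LHS]bilin_mulr.
Qed.

Lemma qform_pinv_gt0 x : centered x -> x != 0 -> 0 < qform P x.
Proof.
move=> x_centered x_neq0; rewrite qform_pinv // qform_laplacian_gt0 //.
  exact: centered_pinv.
by apply: contraNneq x_neq0 => Px0; rewrite -(laplacian_pinv x_centered) Px0 mulmx0.
Qed.

End Laplacian.

Section RayleighQuotient.
Variables (R : realType) (n : nat).

Lemma qform_tr_continuous (M : 'M[R]_n) : continuous (fun v : 'rV[R]_n => qform M v^T).
Proof.
have -> : (fun v : 'rV[R]_n => qform M v^T) =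
    (fun v => \sum_i \sum_j v 0 i * M i j * v 0 j).
  apply/funext => v; rewrite [qform _ _]bilin_sum.
  by apply: eq_bigr => i _; apply: eq_bigr => j _; rewrite !mxE.
apply: continuous_big => [|i _]; first exact: add_continuous.
apply: continuous_big => [|j _ v]; first exact: add_continuous.
apply: (@continuousM _ _ (fun v : 'rV[R]_n => v 0 i * M i j) (fun v => v 0 j));
  last exact: coord_continuous.
apply: (@continuousM _ _ (fun v : 'rV[R]_n => v 0 i) (fun=> M i j));
  [exact: coord_continuous | exact: cst_continuous].
Qed.

Let sphere := [set v : 'rV[R]_n | `|v| = 1 /\ \sum_i v 0 i = 0].

Lemma sphere_compact : compact sphere.
Proof.
apply: bounded_closed_compact.
  rewrite /= /bounded_near; near=> M => v [v1 _] /=; rewrite v1.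
  near: M; exact: nbhs_pinfty_ge.
have -> : sphere = (@Num.norm _ 'rV[R]_n @^-1` [set 1]) `&`
                   ((fun v : 'rV[R]_n => \sum_i v 0 i) @^-1` [set 0]).
  by [].
apply: closedI; apply: preimage_closed; try exact: closed_eq; move=> v _.
  exact: norm_continuous.
by apply: continuous_big => [|i _]; [exact: add_continuous | exact: coord_continuous].
Unshelve. all: by end_near.
Qed.

Lemma rayleigh_quotient_max (A B : 'M[R]_n) :
    (forall y, centered y -> y != 0 -> 0 < qform A y) ->
    forall y0 : 'cV[R]_n, centered y0 -> y0 != 0 ->
  exists2 c, centered c /\ c != 0 &
    forall y, centered y -> qform B y <= qform B c / qform A c * qform A y.
Proof.
move=> A_pos y0 y0_centered y0_neq0.
pose f (v : 'rV[R]_n) := qform B v^T / qform A v^T.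
have tr_neq0 (y : 'cV[R]_n) : y != 0 -> y^T != 0.
  by apply: contra => /eqP y_eq0; rewrite -[y]trmxK y_eq0 trmx0.
have normalize y : centered y -> y != 0 -> sphere (`|y^T|^-1 *: y^T).
  move=> /centered_sum y_sum y_neq0; split.
    have y_norm_neq0 : `|y^T| != 0 by rewrite normr_eq0 tr_neq0.
    by rewrite normrZ normrV ?unitfE // normr_id mulVf.
  by under eq_bigr do rewrite !mxE; rewrite -mulr_sumr y_sum mulr0.
have sphere_centered v : sphere v -> centered v^T /\ v^T != 0.
  move=> [v1 v_sum]; split.
    by apply/centered_sum; under eq_bigr do rewrite mxE.
  apply/eqP => /(congr1 trmx); rewrite trmxK trmx0 => v0.
  by move: v1; rewrite v0 normr0 => /eqP; rewrite eq_sym oner_eq0.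
have f_scale y : y != 0 -> f (`|y^T|^-1 *: y^T) = qform B y / qform A y.
  move=> y_neq0; rewrite /f linearZ /= trmxK ![qform _ (_ *: _)]bilinZZ.
  rewrite -mulf_div divff ?mul1r // expf_neq0 // invr_eq0 normr_eq0 tr_neq0 //.
have f_cont : {within sphere, continuous f}.
  apply: continuous_in_subspaceT => v /set_mem /sphere_centered[v_centered v_neq0].
  apply: (@continuousM _ _ (fun v => qform B v^T) (fun v => (qform A v^T)^-1)).
    exact: qform_tr_continuous.
  apply: (@continuousV _ _ (fun v => qform A v^T)); last exact: qform_tr_continuous.
  by rewrite gt_eqF // A_pos.
have [|c /set_mem c_sphere c_max] := EVT_max_rV _ sphere_compact f_cont.
  by exists (`|y0^T|^-1 *: y0^T); apply: normalize.
have [c_centered c_neq0] := sphere_centered c c_sphere.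
exists c^T => // y y_centered; have [->|y_neq0] := eqVneq y 0.
  by rewrite ![qform _ 0]bilin0l mulr0.
rewrite -ler_pdivrMr ?A_pos // -(f_scale y) //.
by apply: c_max; apply/mem_set/normalize.
Qed.

Lemma rayleigh_max_eigen (A B : 'M[R]_n) mu c :
    A^T = A -> B^T = B -> ones_rV R n *m A = 0 -> ones_rV R n *m B = 0 ->
    centered c -> qform B c = mu * qform A c ->
    (forall y, centered y -> qform B y <= mu * qform A y) ->
  B *m c = mu *: (A *m c).
Proof.
move=> A_sym B_sym ones_A ones_B c_centered c_eq c_max.
pose C := mu *: A - B.
have C_sym : C^T = C by rewrite /C linearB linearZ /= A_sym B_sym.
have ones_C : ones_rV R n *m C = 0.
  by rewrite /C mulmxBr -scalemxAr ones_A ones_B scaler0 subr0.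
have bilin_C y : bilin C y y = mu * qform A y - qform B y.
  by rewrite /bilin /qform /C mulmxBr mulmxBl -scalemxAr -scalemxAl !mxE.
have Cc : C *m c = 0.
  apply: (psd_mul_eq0 C_sym) => [s t|]; last by rewrite bilin_C c_eq subrr.
  rewrite bilin_C subr_ge0 c_max // /centered mulmxDr -!scalemxAr c_centered.
  by rewrite mulmxA ones_C mul0mx !scaler0 addr0.
by apply/eqP; rewrite eq_sym -subr_eq0 scalemxAl -mulmxBl Cc.
Qed.

End RayleighQuotient.

Lemma laplacian_rayleigh_le (R : realType) n (WX WY P : 'M[R]_n) lam :
    weight_matrix WX -> connected_graph WX -> weight_matrix WY ->
    MP_pinv (laplacian WX) P -> is_lambda_max (P *m laplacian WY) lam ->
  forall y, centered y -> qform (laplacian WY) y <= lam * qform (laplacian WX) y.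
Proof.
move=> WX_weight WX_conn WY_weight P_pinv [_ lam_max] y y_centered.
have [->|y_neq0] := eqVneq y 0; first by rewrite ![qform _ 0]bilin0l mulr0.
have LX_pos := qform_laplacian_gt0 WX_weight WX_conn.
have [c [c_centered c_neq0] c_max] :=
  rayleigh_quotient_max (laplacian WY) LX_pos y_centered y_neq0.
set mu := qform (laplacian WY) c / qform (laplacian WX) c in c_max.
have LY_c : laplacian WY *m c = mu *: (laplacian WX *m c).
  apply: (rayleigh_max_eigen (laplacian_tr WX_weight) (laplacian_tr WY_weight)
    (ones_laplacian WX_weight) (ones_laplacian WY_weight) c_centered _ c_max).
  by rewrite /mu mulfVK // gt_eqF // LX_pos.
have mu_eig : eigenvalue (P *m laplacian WY) mu.
  apply: (eigenvalue_col c_neq0).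
  by rewrite -mulmxA LY_c -scalemxAr (pinv_laplacian WX_weight WX_conn P_pinv).
apply: le_trans (c_max y y_centered) _.
by rewrite ler_wpM2r ?qform_laplacian_ge0 ?lam_max.
Qed.

Lemma qform_pinv_le (R : realType) n (WX WY LXp LYp : 'M[R]_n) lam :
    weight_matrix WX -> connected_graph WX ->
    weight_matrix WY -> connected_graph WY ->
    MP_pinv (laplacian WX) LXp -> MP_pinv (laplacian WY) LYp ->
    is_lambda_max (LXp *m laplacian WY) lam ->
  forall x, centered x -> x != 0 -> qform LXp x <= lam * qform LYp x.
Proof.
move=> WX_weight WX_conn WY_weight WY_conn LXp_pinv LYp_pinv lam_max x x_centered x_neq0.
set u := LXp *m x; set w := LYp *m x.
have a_gt0 := qform_pinv_gt0 WX_weight WX_conn LXp_pinv x_centered x_neq0.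
have b_gt0 := qform_pinv_gt0 WY_weight WY_conn LYp_pinv x_centered x_neq0.
have cross : bilin (laplacian WY) u w = qform LXp x.
  rewrite bilin_mulr (laplacian_pinv WY_weight WY_conn LYp_pinv x_centered).
  by rewrite bilin_tr trmx1 -bilin_mulr.
have CS :
    bilin (laplacian WY) u w ^+ 2 <= qform (laplacian WY) u * qform (laplacian WY) w.
  by apply: (bilin_CS (laplacian_tr WY_weight)) => s t; apply: qform_laplacian_ge0.
have u_le : qform (laplacian WY) u <= lam * qform LXp x.
  rewrite (qform_pinv WX_weight WX_conn LXp_pinv x_centered).
  apply: (laplacian_rayleigh_le WX_weight WX_conn WY_weight LXp_pinv lam_max).
  exact: centered_pinv LXp_pinv x.
rewrite cross -(qform_pinv WY_weight WY_conn LYp_pinv x_centered) in CS.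
rewrite -(ler_pM2l a_gt0) mulrA -expr2; apply: le_trans CS _.
by apply: ler_wpM2r; [exact: ltW | rewrite mulrC].
Qed.

Lemma centered_epq (R : realType) n (p q : 'I_n) : centered (epq R p q).
Proof.
have sum_delta (r : 'I_n) : \sum_i (delta_mx r 0 : 'cV[R]_n) i 0 = 1.
  rewrite (bigD1 r) //= big1 => [|i /negbTE ir]; first by rewrite mxE !eqxx addr0.
  by rewrite mxE ir.
by rewrite /centered /epq mulmxBr !ones_rV_mul !sum_delta subrr.
Qed.

Lemma epq_neq0 (R : realType) n (p q : 'I_n) : p != q -> epq R p q != 0.
Proof.
move=> pq; apply/eqP => /matrixP/(_ p 0); rewrite !mxE eqxx (negbTE pq) subr0.
by move/eqP; rewrite oner_eq0.
Qed.

Theorem theorem3 (R : realType) (N : nat) (HN : (2 <= N)%N)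
  (WX WY : 'M[R]_N)
  (hWX : weight_matrix WX) (hWY : weight_matrix WY)
  (cX : connected_graph WX) (cY : connected_graph WY)
  (LXp LYp : 'M[R]_N)
  (hXp : MP_pinv (laplacian WX) LXp) (hYp : MP_pinv (laplacian WY) LYp)
  (lam : R) (hlam : is_lambda_max (LXp *m laplacian WY) lam) :
  forall p q : 'I_N, p != q -> 1 / lam <= gammaF LXp LYp p q.
Proof.
move=> p q pq; have x_centered := centered_epq R p q; have x_neq0 := epq_neq0 R pq.
rewrite /gammaF; apply: inv_le_ratio.
- exact: (qform_pinv_gt0 hWX cX hXp) x_centered x_neq0.
- exact/ltW/(qform_pinv_gt0 hWY cY hYp).
- exact: (qform_pinv_le hWX cX hWY cY hXp hYp hlam) x_centered x_neq0.
Qed.
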